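(* Let $s\ge1$ and $n\ge0$ be integers. If $n\leq s$, then $A_{231,321}(U_{\mathrm{spine}=s,n}^\alpha)=1$. If $n>s$, then \[A_{231,321}(U_{\mathrm{spine}=s,n}^\alpha)=\sum_{j=1}^sA_{231,321}(U_{\mathrm{spine}=s,n-j}^\alpha).\]
   Context: For integers $s\ge1$ and $n\ge 0$, the labeled uneven comb $U^\alpha_{\mathrm{spine}=s,n}$ is the poset on $\{1,\dots,n\}$ whose order is generated by the covering relations $i\lessdot i+1$ for $1\le i\le s-1$ with $i+1\le n$, and $i\lessdot i+s$ whenever $i+s\le n$. A linear extension is viewed as a permutation of $[n]$ in which $x$ precedes $y$ whenever $x<y$ in the poset. $A_{231,321}(P)$ denotes the number of linear extensions of $P$ that avoid both patterns $231$ and $321$. *)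

From mathcomp Require Import all_boot.
Local Open Scope nat_scope.
Set Implicit Arguments. Unset Strict Implicit. Unset Printing Implicit Defensive.

(* Covering relations of the labeled uneven comb U^alpha_{spine=s,n} on {1..n}:
   i <. i+1 for 1 <= i <= s-1 (with i+1 <= n), and i <. i+s whenever i+s <= n.
   Elements are represented in 'I_n.+1; 0 is never related. *)
Definition comb_cover (s n : nat) (x y : 'I_n.+1) : bool :=
  let i := nat_of_ord x in let j := nat_of_ord y in
  [&& (1 <= i)%N, (j <= n)%N &
  (((i <= s - 1)%N && (j == i.+1)) || (j == i + s))].

Definition comb_lt (s n : nat) (x y : 'I_n.+1) : bool :=
  (x != y) && connect (@comb_cover s n) x y.

Definition is_linext (s n : nat) (w : seq nat) : bool :=
  perm_eq w (iota 1 n) &&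
  [forall x : 'I_n.+1, forall y : 'I_n.+1,
     @comb_lt s n x y ==> (index (x : nat) w < index (y : nat) w)].

Definition contains231 (w : seq nat) : bool :=
  [exists i : 'I_(size w), exists j : 'I_(size w), exists k : 'I_(size w),
     [&& i < j, j < k, nth 0 w k < nth 0 w i & nth 0 w i < nth 0 w j]].

Definition contains321 (w : seq nat) : bool :=
  [exists i : 'I_(size w), exists j : 'I_(size w), exists k : 'I_(size w),
     [&& i < j, j < k, nth 0 w k < nth 0 w j & nth 0 w j < nth 0 w i]].

Definition A_comb (s n : nat) : nat :=
  count (fun w => is_linext s n w && ~~ contains231 w && ~~ contains321 w)
        (permutations (iota 1 n)).

(* Avoiding both 231 and 321 means that no entry is preceded by two larger
   entries.  In such a linear extension w of the comb on [n], the maximum n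
   precedes every later entry, so no later entry may be preceded by another
   larger one: the entries after n increase and exceed all entries before n.
   Hence w is u followed by n, n-j+1, ..., n-1, where u is such an extension
   of the comb on [n-j]; conversely every such word qualifies as long as the
   lower cover of n (n-1 if n <= s, n-s if n > s) lies in u, i.e. j = 1 when
   n <= s and 1 <= j <= s when n > s. *)

From mathcomp Require Import all_boot zify.
Set Implicit Arguments. Unset Strict Implicit. Unset Printing Implicit Defensive.

Definition contains231_321 (w : seq nat) : Prop :=
  exists i j k, [/\ i < j < k, k < size w, nth 0 w k < nth 0 w i,
    nth 0 w k < nth 0 w j & nth 0 w i != nth 0 w j].

Lemma contains231_321P (w : seq nat) :
  contains231 w || contains321 w <-> contains231_321 w.
Proof.
split.
- by case/orP=> /existsP[i /existsP[j /existsP[k /and4P[lt_ij lt_jk lt_ki lt_wij]]]];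
    exists i, j, k; split; rewrite ?ltn_ord //; lia.
- move=> [i [j [k [/andP[lt_ij lt_jk] lt_k lt_ki lt_kj neq_ij]]]].
  have lt_i : i < size w by lia.
  have lt_j : j < size w by lia.
  have [lt_wij | lt_wji | eq_wij] := ltngtP (nth 0 w i) (nth 0 w j);
    last by rewrite eq_wij eqxx in neq_ij.
  + apply/orP; left; apply/existsP; exists (Ordinal lt_i); apply/existsP;
      exists (Ordinal lt_j); apply/existsP; exists (Ordinal lt_k); exact/and4P.
  + apply/orP; right; apply/existsP; exists (Ordinal lt_i); apply/existsP;
      exists (Ordinal lt_j); apply/existsP; exists (Ordinal lt_k); exact/and4P.
Qed.

Lemma contains231_321_catl (u v : seq nat) :
  contains231_321 u -> contains231_321 (u ++ v).
Proof.
move=> [i [j [k [/andP[lt_ij lt_jk] lt_k *]]]].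
exists i, j, k; rewrite !nth_cat size_cat.
have [lt_i lt_j] : i < size u /\ j < size u by lia.
rewrite lt_i lt_j lt_k; split => //; lia.
Qed.

Lemma contains231_321_catr (u v : seq nat) :
  contains231_321 v -> contains231_321 (u ++ v).
Proof.
move=> [i [j [k [/andP[lt_ij lt_jk] lt_k *]]]].
exists (size u + i), (size u + j), (size u + k).
have shift x : (size u + x < size u) = false by lia.
rewrite !nth_cat size_cat !shift !addKn; split => //; lia.
Qed.

Lemma contains231_321_cat (u v : seq nat) : {in u & v, forall a b, a < b} ->
  contains231_321 (u ++ v) -> contains231_321 u \/ contains231_321 v.
Proof.
move=> lt_uv [i [j [k [/andP[lt_ij lt_jk] lt_k]]]]; rewrite size_cat in lt_k.
rewrite !nth_cat; have [lt_ku | le_uk] := ltnP k (size u).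
  have [lt_i lt_j] : i < size u /\ j < size u by lia.
  by rewrite lt_i lt_j => *; left; exists i, j, k; split => //; apply/andP.
have lt_kv : k - size u < size v by lia.
have v_k := mem_nth 0 lt_kv.
have [lt_iu | le_ui] := ltnP i (size u).
  by move/(ltn_trans (lt_uv _ _ (mem_nth 0 lt_iu) v_k)); rewrite ltnn.
have -> : j < size u = false by lia.
move=> *; right; exists (i - size u), (j - size u), (k - size u).
split => //; lia.
Qed.

Lemma contains231_321_pivot (u t : seq nat) (x a b : nat) : a \in u -> b \in t ->
  b < a -> b < x -> a != x -> contains231_321 (u ++ x :: t).
Proof.
move=> ua tb lt_ba lt_bx neq_ax.
exists (index a u), (size u), (size u + (index b t).+1).
have lt_a : index a u < size u by rewrite index_mem.
have lt_b : index b t < size t by rewrite index_mem.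
have shift : (size u + (index b t).+1 < size u) = false by lia.
rewrite !nth_cat lt_a ltnn subnn shift addKn /= !nth_index // size_cat /=.
split => //; lia.
Qed.

Lemma contains231_321_cons (x : nat) (t : seq nat) : {in t, forall a, a < x} ->
  ~ contains231_321 (x :: t) <-> sorted leq t.
Proof.
move=> lt_tx; split.
- move=> no_pat; rewrite sorted_pairwise; last exact: leq_trans.
  apply/(pairwiseP 0) => a b lt_a lt_b lt_ab; rewrite leqNgt; apply/negP => lt_ba.
  have lt_ax : nth 0 t a < x by apply/lt_tx/mem_nth.
  have lt_bx : nth 0 t b < x by apply/lt_tx/mem_nth.
  apply: no_pat; exists 0, a.+1, b.+1; split => //=; lia.
- move=> sorted_t [i [j [k [/andP[lt_ij lt_jk] lt_k _ lt_kj _]]]].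
  case: j k lt_ij lt_jk lt_k lt_kj => [|j] [|k] // _ lt_jk lt_k /=.
  have lt_kt : k < size t := lt_k.
  have lt_jt : j < size t := ltn_trans (lt_jk : j < k) lt_kt.
  by rewrite ltnNge (sorted_leq_nth leq_trans leqnn) ?inE // ltnW.
Qed.

Lemma perm_iota_cat (u t : seq nat) (k : nat) : perm_eq (u ++ t) (iota 1 k) ->
  {in u & t, forall a b, a <= b} ->
  perm_eq u (iota 1 (size u)) /\ perm_eq t (iota (size u).+1 (size t)).
Proof.
move=> perm_ut le_ut.
have sorted_sorts : sorted leq (sort leq u ++ sort leq t).
  rewrite (sorted_pairwise leq_trans) pairwise_cat -!(sorted_pairwise leq_trans).
  rewrite !sort_sorted ?andbT //; try exact: leq_total.
  by apply/allrelP => a b; rewrite !mem_sort; apply: le_ut.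
have perm_sorts : perm_eq (sort leq u ++ sort leq t) (iota 1 (size u + size t)).
  have -> : size u + size t = k by rewrite -size_cat (perm_size perm_ut) size_iota.
  by apply: perm_trans perm_ut; rewrite perm_cat ?perm_sort.
move: (sorted_eq leq_trans anti_leq sorted_sorts (iota_sorted _ _) perm_sorts).
move/eqP; rewrite iotaD eqseq_cat ?size_sort ?size_iota // add1n.
by case/andP=> /eqP <- /eqP <-; split; rewrite perm_sym perm_sort.
Qed.

Definition comb_covern (s i j : nat) : bool :=
  (1 <= i) && ((i <= s - 1) && (j == i.+1) || (j == i + s)).

Lemma comb_covern_ltn s i j : 0 < s -> comb_covern s i j -> i < j.
Proof. by move=> s_gt0 /andP[_ /orP[/andP[_ /eqP->] | /eqP->]]; lia. Qed.

Lemma comb_coverE s n (x y : 'I_n.+1) : comb_cover s x y = comb_covern s x y.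
Proof. by rewrite /comb_cover /comb_covern (_ : y <= n) // -ltnS. Qed.

Definition respects_covers (s n : nat) (w : seq nat) : Prop :=
  forall i j, j <= n -> comb_covern s i j -> index i w < index j w.

Lemma is_linextP s n w : 0 < s ->
  is_linext s n w <-> perm_eq w (iota 1 n) /\ respects_covers s n w.
Proof.
move=> s_gt0; split=> [/andP[perm_w /forallP lin_w] | [perm_w covers_w]].
  split=> // i j le_jn cov_ij; have lt_ij := comb_covern_ltn s_gt0 cov_ij.
  have lt_in : i < n.+1 by lia.
  have lt_jn : j < n.+1 by lia.
  move/forallP/(_ (Ordinal lt_jn))/implyP: (lin_w (Ordinal lt_in)); apply.
  by rewrite /comb_lt -val_eqE /= neq_ltn lt_ij connect1 // comb_coverE.
rewrite /is_linext perm_w; apply/forallP=> x; apply/forallP=> y; apply/implyP.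
case/andP=> neq_xy /connectP[p path_p y_last].
pose before (a b : 'I_n.+1) := index (val a) w < index (val b) w.
have step : subrel (@comb_cover s n) before.
  by move=> a b; rewrite comb_coverE; apply: covers_w; rewrite -ltnS.
have before_trans : transitive before by move=> b a c; apply: ltn_trans.
case: p path_p y_last => [_ eq_yx | z p path_p ->]; first by rewrite eq_yx eqxx in neq_xy.
have /allP := order_path_min before_trans (sub_path step path_p).
by apply; apply: (mem_last z p).
Qed.

Definition avoiding_linext (s n : nat) (w : seq nat) : bool :=
  is_linext s n w && ~~ contains231 w && ~~ contains321 w.

Lemma avoiding_linextP s n w : 0 < s -> avoiding_linext s n w <->
  [/\ perm_eq w (iota 1 n), respects_covers s n w & ~ contains231_321 w].
Proof.
move=> s_gt0; rewrite /avoiding_linext -andbA -negb_or; split.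
  case/andP=> /(is_linextP _ _ s_gt0)[perm_w covers_w] no_pat.
  by split=> // /contains231_321P; apply/negP.
case=> perm_w covers_w no_pat; apply/andP; split; first exact/is_linextP.
by apply/negP=> /contains231_321P.
Qed.

Definition tail_lengths (s n : nat) : seq nat := if s < n then iota 1 s else [:: 1].

Definition attach_tail (n j : nat) (u : seq nat) : seq nat :=
  u ++ n :: iota (n - j).+1 (j - 1).

Lemma mem_tail_lengths s n j :
  (j \in tail_lengths s n) = if s < n then 0 < j <= s else j == 1.
Proof. by rewrite /tail_lengths; case: ltnP; rewrite ?mem_iota ?inE // add1n ltnS. Qed.

Lemma tail_lengths_bounds s n j : 0 < n -> j \in tail_lengths s n -> 0 < j <= n.
Proof. by move=> n_gt0; rewrite mem_tail_lengths; case: ltnP; lia. Qed.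

Lemma perm_iota_drop_max (u t : seq nat) n :
  perm_eq (u ++ n :: t) (iota 1 n) -> perm_eq (u ++ t) (iota 1 n.-1).
Proof.
move=> perm_w; have n_gt0 : 0 < n.
  by move/perm_size: perm_w; rewrite size_cat size_iota /=; lia.
have iota_n : iota 1 n = rcons (iota 1 n.-1) n.
  by rewrite -cats1 -{1}(prednK n_gt0) -(addn1 n.-1) iotaD add1n prednK.
rewrite -(perm_cons n) -(perm_catCA u [:: n] t) (perm_trans perm_w) //.
by rewrite iota_n perm_rcons.
Qed.

Lemma split_at_max (u t : seq nat) n :
  perm_eq (u ++ n :: t) (iota 1 n) -> ~ contains231_321 (u ++ n :: t) ->
  perm_eq u (iota 1 (size u)) /\ t = iota (size u).+1 (size t).
Proof.
move=> perm_w no_pat; have perm_ut := perm_iota_drop_max perm_w.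
have lt_n a : a \in u ++ t -> a < n by rewrite (perm_mem perm_ut) mem_iota; lia.
have sorted_t : sorted leq t.
  apply/(contains231_321_cons (x := n)) => [a ta | /(contains231_321_catr u) //].
  by apply: lt_n; rewrite mem_cat ta orbT.
have le_ut : {in u & t, forall a b, a <= b}.
  move=> a b ua tb; rewrite leqNgt; apply/negP => lt_ba; apply: no_pat.
  apply: (contains231_321_pivot ua tb lt_ba); first by apply: lt_n; rewrite mem_cat tb orbT.
  by rewrite neq_ltn lt_n // mem_cat ua.
have [perm_u perm_t] := perm_iota_cat perm_ut le_ut.
by split=> //; apply: (sorted_eq leq_trans anti_leq sorted_t (iota_sorted _ _) perm_t).
Qed.

Lemma respects_covers_prefix s n m (u v : seq nat) : 0 < s ->
  respects_covers s n (u ++ v) -> m <= n -> perm_eq u (iota 1 m) -> respects_covers s m u.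
Proof.
move=> s_gt0 covers_w le_mn perm_u i j le_jm cov_ij.
have lt_ij := comb_covern_ltn s_gt0 cov_ij.
have i_gt0 : 0 < i by case/andP: cov_ij.
have mem_u a : 0 < a <= m -> a \in u by rewrite (perm_mem perm_u) mem_iota; lia.
have := covers_w i j (leq_trans le_jm le_mn) cov_ij.
by rewrite !index_cat !mem_u //; lia.
Qed.

Lemma tail_length_mem s n (u t : seq nat) : 0 < s -> size u < n ->
  perm_eq u (iota 1 (size u)) -> respects_covers s n (u ++ n :: t) ->
  n - size u \in tail_lengths s n.
Proof.
move=> s_gt0 lt_un perm_u covers_w.
have n_notin_u : n \notin u by rewrite (perm_mem perm_u) mem_iota; lia.
have pred_le p : comb_covern s p n -> p <= size u.
  move=> cov_pn; have := covers_w p n (leqnn n) cov_pn.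
  rewrite (index_pivot _ n_notin_u) index_cat; case: ifP => [p_in_u _ | _]; last by lia.
  by move: p_in_u; rewrite (perm_mem perm_u) mem_iota; lia.
rewrite mem_tail_lengths; case: ltnP => [lt_sn | le_ns].
  suff : comb_covern s (n - s) n by move/pred_le; lia.
  by rewrite /comb_covern; lia.
have [le_n1 | n_gt1] := leqP n 1; first by apply/eqP; lia.
suff : comb_covern s n.-1 n by move/pred_le => ?; apply/eqP; lia.
by rewrite /comb_covern; lia.
Qed.

Lemma avoiding_linext_cat_max s n (u t : seq nat) : 0 < s ->
  avoiding_linext s n (u ++ n :: t) ->
  exists2 j, j \in tail_lengths s n &
    exists2 u', avoiding_linext s (n - j) u' & u ++ n :: t = attach_tail n j u'.
Proof.
move=> s_gt0 /(avoiding_linextP _ _ s_gt0)[perm_w covers_w no_pat].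
have size_w : size u + (size t).+1 = n.
  by rewrite -(size_iota 1 n) -(perm_size perm_w) size_cat.
have [perm_u eq_t] := split_at_max perm_w no_pat.
exists (n - size u); first by apply: tail_length_mem covers_w => //; lia.
rewrite /attach_tail; have -> : n - (n - size u) = size u by lia.
have -> : n - size u - 1 = size t by lia.
exists u; last by rewrite -eq_t.
apply/(avoiding_linextP _ _ s_gt0); split=> //.
  by apply: (respects_covers_prefix s_gt0 covers_w) perm_u; lia.
by move/(contains231_321_catl (n :: t)).
Qed.

Lemma avoiding_linext_split s n w : 0 < s -> 0 < n -> avoiding_linext s n w ->
  exists2 j, j \in tail_lengths s n &
    exists2 u, avoiding_linext s (n - j) u & w = attach_tail n j u.
Proof.
move=> s_gt0 n_gt0 av_w; have /(avoiding_linextP _ _ s_gt0)[perm_w _ _] := av_w.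
have n_in_w : n \in w by rewrite (perm_mem perm_w) mem_iota; lia.
by case/splitPr: n_in_w av_w => u t /(avoiding_linext_cat_max s_gt0).
Qed.

Lemma respects_covers_attach_tail (s n j : nat) (u : seq nat) : 0 < s ->
  j \in tail_lengths s n -> j <= n -> perm_eq u (iota 1 (n - j)) -> respects_covers s (n - j) u ->
  respects_covers s n (attach_tail n j u).
Proof.
move=> s_gt0 j_tail le_jn perm_u covers_u x y le_yn cov_xy.
have lt_xy := comb_covern_ltn s_gt0 cov_xy.
have x_gt0 : 0 < x by case/andP: cov_xy.
have size_u : size u = n - j by rewrite (perm_size perm_u) size_iota.
have mem_u a : (a \in u) = (0 < a <= n - j).
  by rewrite (perm_mem perm_u) mem_iota add1n ltnS.
have index_tail a : n - j < a < n ->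
    index a (attach_tail n j u) = (n - j).+1 + index a (iota (n - j).+1 (j - 1)).
  move=> a_tail; rewrite /attach_tail index_cat mem_u ifF /=; last by lia.
  by rewrite size_u addSnnS ifF //; apply/eqP; lia.
have [le_y | lt_y] := leqP y (n - j).
  have [x_in_u y_in_u] : x \in u /\ y \in u by rewrite !mem_u; lia.
  by rewrite /attach_tail !index_cat x_in_u y_in_u; apply: covers_u.
have le_index_y : n - j <= index y (attach_tail n j u).
  by rewrite /attach_tail index_cat mem_u ifF ?size_u ?leq_addr //; lia.
have [le_x | lt_x] := leqP x (n - j).
  have x_in_u : x \in u by rewrite mem_u; lia.
  have : index x u < n - j by rewrite -size_u index_mem.
  have -> : index x (attach_tail n j u) = index x u by rewrite /attach_tail index_cat x_in_u.
  lia.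
have lt_yn : y < n.
  rewrite ltn_neqAle le_yn andbT; apply/eqP => eq_yn.
  by move: j_tail cov_xy; rewrite mem_tail_lengths /comb_covern eq_yn; case: ltnP; lia.
rewrite !index_tail ?ltn_add2l; try lia.
rewrite ltnNge; apply/negP => /(sorted_leq_index leq_trans leqnn (iota_sorted _ _)).
by rewrite !mem_iota; lia.
Qed.

Lemma avoiding_linext_attach_tail (s n j : nat) (u : seq nat) : 0 < s -> 0 < n ->
  j \in tail_lengths s n -> avoiding_linext s (n - j) u -> avoiding_linext s n (attach_tail n j u).
Proof.
move=> s_gt0 n_gt0 j_tail /(avoiding_linextP _ _ s_gt0)[perm_u covers_u no_pat].
have /andP[j_gt0 le_jn] := tail_lengths_bounds n_gt0 j_tail.
have mem_u a : (a \in u) = (0 < a <= n - j).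
  by rewrite (perm_mem perm_u) mem_iota add1n ltnS.
apply/(avoiding_linextP _ _ s_gt0); split.
- have iota_n : iota 1 n = iota 1 (n - j) ++ rcons (iota (n - j).+1 (j - 1)) n.
    rewrite -{1}(subnK le_jn) iotaD add1n -cats1; congr (_ ++ _).
    have [k eq_j] : exists k, j = k.+1 by exists j.-1; lia.
    rewrite eq_j subn1 -[X in iota _ X](addn1 k) iotaD /=.
    by rewrite (_ : (n - k.+1).+1 + k = n) //; lia.
  by rewrite iota_n /attach_tail perm_cat // perm_sym perm_rcons.
- exact: respects_covers_attach_tail.
- have lt_u_tail : {in u & n :: iota (n - j).+1 (j - 1), forall a b, a < b}.
    by move=> a b; rewrite mem_u inE mem_iota => ? /orP[/eqP -> | ?]; lia.
  case/(contains231_321_cat lt_u_tail) => //; apply/(contains231_321_cons _).2.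
    by move=> a; rewrite mem_iota; lia.
  exact: iota_sorted.
Qed.

Lemma tail_length_attach_tail (n j : nat) (u : seq nat) : 0 < j <= n ->
  perm_eq u (iota 1 (n - j)) -> n - index n (attach_tail n j u) = j.
Proof.
move=> /andP[j_gt0 le_jn] perm_u.
have n_notin_u : n \notin u by rewrite (perm_mem perm_u) mem_iota; lia.
by rewrite /attach_tail index_pivot // (perm_size perm_u) size_iota; lia.
Qed.

Lemma count_partition (T I : eqType) (J : seq I) (f : T -> I) (a : pred T) (r : seq T) :
  uniq J -> {in r, forall x, a x -> f x \in J} ->
  count a r = \sum_(j <- J) count (fun x => a x && (f x == j)) r.
Proof.
move=> uniq_J; elim: r => [|x r IH] f_in /=; first by rewrite big1.
rewrite big_split /= -IH => [|y r_y]; last by apply: f_in; rewrite inE r_y orbT.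
congr (_ + _); case: (boolP (a x)) => [a_x | _] /=; last by rewrite big1.
have -> : \sum_(j <- J) (f x == j) = count_mem (f x) J.
  rewrite -sum1_count [RHS]big_mkcond.
  by apply: eq_bigr => j _; rewrite /= eq_sym; case: eqP.
by rewrite count_uniq_mem // f_in ?inE ?eqxx.
Qed.

Lemma count_avoiding_linext_tail (s n j : nat) : 0 < s -> 0 < n ->
  j \in tail_lengths s n ->
  count (fun w => avoiding_linext s n w && (n - index n w == j)) (permutations (iota 1 n)) =
  A_comb s (n - j).
Proof.
move=> s_gt0 n_gt0 j_tail.
have /andP[j_gt0 le_jn] := tail_lengths_bounds n_gt0 j_tail.
have perm_av m u : avoiding_linext s m u -> perm_eq u (iota 1 m).
  by case/(avoiding_linextP _ _ s_gt0).
pose ext_tail := [seq u <- permutations (iota 1 (n - j)) | avoiding_linext s (n - j) u].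
transitivity (size (map (attach_tail n j) ext_tail)); last by rewrite size_map size_filter.
rewrite -size_filter; apply/perm_size/uniq_perm.
- by rewrite filter_uniq ?permutations_uniq.
- rewrite map_inj_in_uniq ?filter_uniq ?permutations_uniq // => u1 u2.
  rewrite !mem_filter !mem_permutations.
  move=> /andP[_ /perm_size size_u1] /andP[_ /perm_size size_u2].
  by move/eqP; rewrite eqseq_cat ?size_u1 ?size_u2 // => /andP[/eqP].
move=> w; rewrite mem_filter mem_permutations; apply/idP/mapP.
  case/andP=> /andP[av_w /eqP tail_w] _.
  have [j' j'_tail [u av_u eq_w]] := avoiding_linext_split s_gt0 n_gt0 av_w.
  have eq_j : j' = j.
    rewrite -tail_w eq_w tail_length_attach_tail ?perm_av //.
    exact: tail_lengths_bounds n_gt0 j'_tail.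
  exists u; last by rewrite eq_w eq_j.
  by rewrite mem_filter mem_permutations -eq_j av_u perm_av.
case=> u; rewrite mem_filter mem_permutations => /andP[av_u _] ->.
have av_w := avoiding_linext_attach_tail s_gt0 n_gt0 j_tail av_u.
by rewrite av_w tail_length_attach_tail ?perm_av ?eqxx ?j_gt0 //=.
Qed.

Lemma A_comb_rec s n : 0 < s -> 0 < n ->
  A_comb s n = \sum_(j <- tail_lengths s n) A_comb s (n - j).
Proof.
move=> s_gt0 n_gt0.
rewrite [LHS](count_partition (f := fun w => n - index n w) (J := tail_lengths s n)).
- by apply: eq_big_seq => j j_tail; apply: count_avoiding_linext_tail.
- by rewrite /tail_lengths; case: ifP; rewrite ?iota_uniq.
move=> w _ av_w; have [j j_tail [u av_u ->]] := avoiding_linext_split s_gt0 n_gt0 av_w.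
rewrite tail_length_attach_tail ?(tail_lengths_bounds n_gt0 j_tail) //.
by case/(avoiding_linextP _ _ s_gt0): av_u.
Qed.

Lemma A_comb0 s : 0 < s -> A_comb s 0 = 1.
Proof.
move=> s_gt0; have av_nil : avoiding_linext s 0 [::].
  apply/(avoiding_linextP _ _ s_gt0); split=> // [i j le_j0 | [i [j [k [_ //]]]]].
  by move/(comb_covern_ltn s_gt0); lia.
by rewrite /A_comb /= -/(avoiding_linext s 0 [::]) av_nil.
Qed.

Theorem theorem7 (s n : nat) (hs : 1 <= s) :
  (n <= s -> A_comb s n = 1) /\
  (s < n -> A_comb s n = \sum_(1 <= j < s.+1) A_comb s (n - j)).
Proof.
split=> [|lt_sn]; last first.
  have n_gt0 : 0 < n := leq_ltn_trans (leq0n s) lt_sn.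
  by rewrite A_comb_rec // /tail_lengths lt_sn /index_iota subn1.
elim: n => [|n IH] le_ns; first exact: A_comb0.
by rewrite A_comb_rec // /tail_lengths ltnNge le_ns big_seq1 subn1 IH // ltnW.
Qed.
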